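(* Let $(\mathbf{A},E,D)$ be a scheme on $P$ compute nodes with gradient dimension $d\ge 1$, and let $s\ge 0$ be an integer. If $(\mathbf{A},E,D)$ tolerates $s$ adversarial nodes, then its redundancy ratio satisfies $r\ge 2s+1$, i.e. $\|\mathbf{A}\|_0\ge (2s+1)P$.
   Context: Fix integers $P\ge 1$ (number of compute nodes) and $d\ge 1$. A scheme is a triple $(\mathbf{A},E,D)$ where $\mathbf{A}\in\{0,1\}^{P\times P}$ is an allocation matrix ($\mathbf{A}_{j,k}=1$ means node $j$ is assigned gradient $k$), $E=(E_1,\dots,E_P)$ with each $E_j:\mathbb{R}^{d\times P}\to\mathbb{R}^d$ an arbitrary function (encoder of node $j$), and $D:\mathbb{R}^{d\times P}\to\mathbb{R}^d$ an arbitrary function (decoder). For $\mathbf{G}=[\mathbf{g}_1,\dots,\mathbf{g}_P]\in\mathbb{R}^{d\times P}$, let $\mathbf{Y}_j=(\mathbf{1}_d\mathbf{A}_{j,\cdot})\odot\mathbf{G}$ (the $d\times P$ matrix whose $k$-th column is $\mathbf{g}_k$ if $\mathbf{A}_{j,k}=1$ and $\mathbf{0}_d$ otherwise; $\odot$ is the entrywise product, $\mathbf{1}_d$ the all-ones column vector), $\mathbf{z}_j=E_j(\mathbf{Y}_j)$, and $\mathbf{Z}^{\mathbf{A},E,\mathbf{G}}=[\mathbf{z}_1,\dots,\mathbf{z}_P]\in\mathbb{R}^{d\times P}$. The scheme tolerates $s$ adversarial nodes if for every $\mathbf{G}\in\mathbb{R}^{d\times P}$ and every $\mathbf{N}\in\mathbb{R}^{d\times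 P}$ with at most $s$ nonzero columns, $D(\mathbf{Z}^{\mathbf{A},E,\mathbf{G}}+\mathbf{N})=\mathbf{G}\mathbf{1}_P$. The redundancy ratio is $r=\frac1P\|\mathbf{A}\|_0$, where $\|\mathbf{A}\|_0$ is the number of nonzero entries of $\mathbf{A}$. *)

From mathcomp Require Import all_boot.
From Stdlib Require Import Reals.
Set Implicit Arguments. Unset Strict Implicit. Unset Printing Implicit Defensive.

Definition rmat (d P : nat) := 'I_d -> 'I_P -> R.
Definition rvec (d : nat) := 'I_d -> R.

(* Allocation matrix A in {0,1}^{P x P}: A j k = true iff node j holds gradient k. *)
Definition alloc (P : nat) := 'I_P -> 'I_P -> bool.

Definition Ymat d P (A : alloc P) (G : rmat d P) (j : 'I_P) : rmat d P :=
  fun i k => if A j k then G i k else 0%R.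

Definition Zmat d P (A : alloc P) (E : 'I_P -> rmat d P -> rvec d) (G : rmat d P)
  : rmat d P := fun i j => E j (Ymat A G j) i.

Definition colsum d P (G : rmat d P) : rvec d :=
  fun i => \big[Rplus/0%R]_(k < P) G i k.

Definition at_most_cols d P (s : nat) (N : rmat d P) : Prop :=
  exists S : {set 'I_P}, #|S| <= s /\ forall k, k \notin S -> forall i, N i k = 0%R.

Definition madd d P (M N : rmat d P) : rmat d P := fun i k => (M i k + N i k)%R.

Definition tolerates d P (A : alloc P) (E : 'I_P -> rmat d P -> rvec d)
  (D : rmat d P -> rvec d) (s : nat) : Prop :=
  forall (G N : rmat d P), at_most_cols s N ->
    D (madd (Zmat A E G) N) = colsum G.

Definition nnz P (A : alloc P) : nat := #|[set jk : 'I_P * 'I_P | A jk.1 jk.2]|.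

(* If a gradient column k were held by at most 2s nodes, split those holders into two
   groups of at most s nodes each. Take two gradient matrices differing only in column k
   and with different column sums: their encodings differ only on the holders of k, so
   the adversary can corrupt the first group in one case and the second group in the other
   to produce the same received matrix, and the decoder cannot output both sums. Hence every
   column of A has at least 2s+1 ones. *)
From mathcomp Require Import all_boot.
From Stdlib Require Import Reals FunctionalExtensionality.
From HB Require Import structures.
From mathcomp Require Import zify.

Set Implicit Arguments.
Unset Strict Implicit.
Unset Printing Implicit Defensive.

HB.instance Definition _ :=
  Monoid.isComLaw.Build R 0%R Rplus (fun a b c => esym (Rplus_assoc a b c)) Rplus_comm Rplus_0_l.

Lemma card_split_le (T : finType) (S : {set T}) (m n : nat) :
  #|S| <= m + n ->
  exists S1 : {set T}, [/\ S1 \subset S, #|S1| <= m & #|S :\: S1| <= n].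
Proof.
move=> leS.
have /card_geqP[s [uniq_s size_s sub_s]] : minn m #|S| <= #|S| by exact: geq_minr.
have sub1 : [set x in s] \subset S by apply/subsetP=> x; rewrite inE; exact: sub_s.
exists [set x in s]; rewrite cardsDS // cardsE (card_uniqP uniq_s) size_s.
split=> //; lia.
Qed.

Lemma nnz_col_sum (P : nat) (A : alloc P) :
  nnz A = \sum_(k < P) #|[set j | A j k]|.
Proof.
transitivity (\sum_(k < P) \sum_(j < P) (if A j k then 1 else 0)).
  rewrite exchange_big pair_bigA /= /nnz -sum1_card big_mkcond /=.
  by apply: eq_bigr => jk _; rewrite inE.
apply: eq_bigr => k _; rewrite -sum1_card [RHS]big_mkcond.
by apply: eq_bigr => j _; rewrite inE.
Qed.

Definition msub d P (M N : rmat d P) : rmat d P := fun i k => (M i k - N i k)%R.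

Lemma madd_msub d P (M N : rmat d P) : madd N (msub M N) = M.
Proof.
by apply: functional_extensionality => i; apply: functional_extensionality => k;
  rewrite /madd /msub Rplus_minus.
Qed.

Lemma at_most_cols_msub d P s (S : {set 'I_P}) (M N : rmat d P) :
  #|S| <= s -> (forall k, k \notin S -> forall i, M i k = N i k) ->
  at_most_cols s (msub M N).
Proof.
by move=> leS eqMN; exists S; split=> // k kS i; rewrite /msub eqMN ?Rminus_diag.
Qed.

Section Tolerance.

Variables (d P s : nat) (A : alloc P).
Variables (E : 'I_P -> rmat d P -> rvec d) (D : rmat d P -> rvec d).
Hypothesis tol : tolerates A E D s.

Lemma Zmat_col_eq (G G' : rmat d P) (j : 'I_P) :
  (forall k, A j k -> forall i, G i k = G' i k) ->
  forall i, Zmat A E G i j = Zmat A E G' i j.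
Proof.
move=> eqG i; rewrite /Zmat; congr (E j _ i).
apply: functional_extensionality => i'; apply: functional_extensionality => k.
by rewrite /Ymat; case: ifP => // /eqG ->.
Qed.

(* The received matrix that is [Zmat G'] on [S1] and [Zmat G] elsewhere is within
   [s] corrupted columns of both encodings. *)
Lemma tolerates_colsum_eq (G G' : rmat d P) (S : {set 'I_P}) :
  #|S| <= s + s ->
  (forall j, j \notin S -> forall i, Zmat A E G i j = Zmat A E G' i j) ->
  colsum G = colsum G'.
Proof.
move=> leS eqZ; have [S1 [subS1 leS1 leS2]] := card_split_le leS.
pose M : rmat d P := fun i j => if j \in S1 then Zmat A E G' i j else Zmat A E G i j.
have N_ok : at_most_cols s (msub M (Zmat A E G)).
  by apply: (at_most_cols_msub leS1) => j /negbTE j_S1 i; rewrite /M j_S1.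
have N'_ok : at_most_cols s (msub M (Zmat A E G')).
  apply: (at_most_cols_msub leS2) => j j_S2 i; rewrite /M.
  case: ifP => // j_S1; rewrite eqZ //.
  by move: j_S2; rewrite in_setD j_S1.
by rewrite -(tol G N_ok) -(tol G' N'_ok) !madd_msub.
Qed.

Lemma col_holders_ge (hd : 1 <= d) (k : 'I_P) : 2 * s + 1 <= #|[set j | A j k]|.
Proof.
rewrite leqNgt; apply/negP => small.
pose i0 : 'I_d := Ordinal hd.
pose G1 : rmat d P := fun i k' => if (k' == k) && (i == i0) then 1%R else 0%R.
have eqZ : forall j, j \notin [set j | A j k] ->
    forall i, Zmat A E (fun _ _ => 0%R) i j = Zmat A E G1 i j.
  move=> j; rewrite inE => Ajk; apply: Zmat_col_eq => k' Ajk' i.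
  by rewrite /G1; case: eqP => // eq_k; rewrite -eq_k Ajk' in Ajk.
have few : #|[set j | A j k]| <= s + s by lia.
have /(f_equal (fun v => v i0)) := tolerates_colsum_eq few eqZ.
rewrite /colsum big1 // (bigD1 k) //= /G1 !eqxx big1 => [|j /negbTE -> //].
by rewrite Rplus_0_r => /esym; exact: R1_neq_R0.
Qed.

End Tolerance.

Theorem theorem1 (P d s : nat) (hP : 1 <= P) (hd : 1 <= d)
  (A : alloc P) (E : 'I_P -> rmat d P -> rvec d) (D : rmat d P -> rvec d) :
  tolerates A E D s -> (2 * s + 1) * P <= nnz A.
Proof.
move=> tol; rewrite nnz_col_sum mulnC -{1}(card_ord P) -sum_nat_const.
by apply: leq_sum => k _; exact: col_holders_ge tol hd k.
Qed.
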